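(* Let $G$ and $H$ be undirected graphs with nonnegative edge weights on the same vertex set of $n$ vertices, with adjacency matrices $A_G,A_H$, degree matrices $D_G,D_H$, and Laplacian matrices $L_G=D_G-A_G$ and $L_H=D_H-A_H$. Then \[ \|A_G-A_H\|\leq\sqrt{n}\,\|L_G-L_H\|, \] where $\|\cdot\|$ denotes the spectral (2-)norm.
   Context: For a graph $G$ on vertices $v_1,\dots,v_n$ with edge weights $w_{ij}\geq0$ (and $w_{ij}=0$ for non-edges), $(A_G)_{ij}=w_{ij}$ for $i\neq j$, $(A_G)_{ii}=0$, and $D_G$ is diagonal with $(D_G)_{ii}=\sum_j w_{ij}$. *)

From HB Require Import structures.
From mathcomp Require Import all_boot all_order all_algebra.
From mathcomp Require Import boolp classical_sets reals.
Set Implicit Arguments. Unset Strict Implicit. Unset Printing Implicit Defensive.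
Import Order.TTheory GRing.Theory Num.Theory.
Local Open Scope ring_scope.
Local Open Scope classical_set_scope.

(* A weighted undirected graph on vertices 'I_n is given by its weight
   matrix W : 'M[R]_n (W i j = w_ij, 0 for non-edges). *)
Definition weight_graph (R : realType) (n : nat) (W : 'M[R]_n) : Prop :=
  (forall i j, W i j = W j i) /\ (forall i j, 0 <= W i j) /\ (forall i, W i i = 0).

Definition adjacency (R : realType) (n : nat) (W : 'M[R]_n) : 'M[R]_n :=
  \matrix_(i, j) (if i == j then 0 else W i j).

Definition degree_mx (R : realType) (n : nat) (W : 'M[R]_n) : 'M[R]_n :=
  diag_mx (\row_i (\sum_j W i j)).

Definition laplacian (R : realType) (n : nat) (W : 'M[R]_n) : 'M[R]_n :=
  degree_mx W - adjacency W.

Definition enorm (R : realType) (n : nat) (x : 'cV[R]_n) : R :=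
  Num.sqrt (\sum_i (x i 0) ^+ 2).

Definition spectral_norm (R : realType) (n : nat) (M : 'M[R]_n) : R :=
  sup [set enorm (M *m x) | x in [set x : 'cV[R]_n | enorm x <= 1]].

(* The spectral and Frobenius norms of an n x n matrix are within a factor
   sqrt n of each other: ||M|| <= ||M||_F since each row of M x is bounded by
   Cauchy-Schwarz, and ||M||_F^2 <= n ||M||^2 since each of the n columns of M
   is the image of a unit vector.  Off the diagonal L_G - L_H equals
   -(A_G - A_H), and A_G - A_H vanishes on the diagonal, so
   ||A_G - A_H||_F <= ||L_G - L_H||_F, and the theorem follows from
   ||A_G - A_H|| <= ||A_G - A_H||_F <= ||L_G - L_H||_F
                 <= sqrt n ||L_G - L_H||. *)

From mathcomp Require Import all_boot all_order all_algebra.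
From mathcomp Require Import boolp classical_sets reals.
From mathcomp Require Import ring.
Import Order.TTheory GRing.Theory Num.Theory.
Set Implicit Arguments. Unset Strict Implicit.
Local Open Scope ring_scope.

Section CauchySchwarz.
Variables (R : realDomainType) (I : finType).

(* Lagrange's identity: the gap between the two sides is half of
   \sum_i \sum_j (a i * x j - a j * x i) ^+ 2. *)
Lemma sqr_sum_mul_le (a x : I -> R) :
  (\sum_i a i * x i) ^+ 2 <= (\sum_i a i ^+ 2) * (\sum_i x i ^+ 2).
Proof.
set P := \sum_i \sum_j a i ^+ 2 * x j ^+ 2.
set Q := \sum_i \sum_j (a i * x i) * (a j * x j).
have -> : (\sum_i a i ^+ 2) * (\sum_i x i ^+ 2) = P.
  by rewrite mulr_suml; apply: eq_bigr => i _; rewrite mulr_sumr.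
have -> : (\sum_i a i * x i) ^+ 2 = Q.
  by rewrite expr2 mulr_suml; apply: eq_bigr => i _; rewrite mulr_sumr.
have lagrange : \sum_i \sum_j (a i * x j - a j * x i) ^+ 2 = (P - Q) *+ 2.
  have -> : (P - Q) *+ 2 = P + P - Q *+ 2 by rewrite mulrnBl mulr2n.
  rewrite {2}/P [X in _ = _ + X - _]exchange_big -big_split /= /Q.
  rewrite -sumrMnl -sumrB.
  apply: eq_bigr => i _; rewrite -big_split /= -sumrMnl -sumrB.
  by apply: eq_bigr => j _; ring.
rewrite -subr_ge0 -(pmulrn_lge0 _ (isT : 0 < 2)%N) -lagrange.
by apply: sumr_ge0 => i _; apply: sumr_ge0 => j _; apply: sqr_ge0.
Qed.

End CauchySchwarz.

Section MatrixNorms.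
Local Open Scope classical_set_scope.
Variables (R : realType) (n : nat).
Implicit Types (M : 'M[R]_n) (x : 'cV[R]_n).

Definition frobenius2 M : R := \sum_i \sum_j M i j ^+ 2.

Lemma frobenius2_ge0 M : 0 <= frobenius2 M.
Proof. by apply: sumr_ge0 => i _; apply: sumr_ge0 => j _; apply: sqr_ge0. Qed.

Lemma enorm_ge0 x : 0 <= enorm x.
Proof. exact: sqrtr_ge0. Qed.

Lemma sqr_enorm x : enorm x ^+ 2 = \sum_i x i 0 ^+ 2.
Proof. by rewrite sqr_sqrtr //; apply: sumr_ge0 => i _; apply: sqr_ge0. Qed.

Lemma enorm0 : enorm (0 : 'cV[R]_n) = 0.
Proof. by rewrite /enorm big1 ?sqrtr0 // => i _; rewrite mxE expr0n. Qed.

Lemma enorm_delta_mx (j : 'I_n) : enorm (delta_mx j 0 : 'cV[R]_n) = 1.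
Proof.
rewrite /enorm (bigD1 j) //= big1 ?addr0 ?mxE ?eqxx ?expr1n ?sqrtr1 //.
by move=> i /negbTE ij; rewrite mxE ij expr0n.
Qed.

Lemma enorm_mulmx_le M x :
  enorm (M *m x) <= Num.sqrt (frobenius2 M) * enorm x.
Proof.
rewrite /enorm -sqrtrM ?frobenius2_ge0 // ler_sqrt; last first.
  rewrite mulr_ge0 ?frobenius2_ge0 //.
  by apply: sumr_ge0 => i _; apply: sqr_ge0.
rewrite /frobenius2 mulr_suml; apply: ler_sum => i _; rewrite mxE.
exact: sqr_sum_mul_le (fun j => M i j) (fun j => x j 0).
Qed.

Lemma spectral_norm_has_sup M :
  has_sup [set enorm (M *m x) | x in [set x : 'cV[R]_n | enorm x <= 1]].
Proof.
split; first by exists (enorm (M *m 0)), 0; rewrite //= enorm0.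
exists (Num.sqrt (frobenius2 M)) => _ [x /= x_le1 <-].
rewrite (le_trans (enorm_mulmx_le M x)) // ler_piMr ?sqrtr_ge0 //.
Qed.

Lemma enorm_mulmx_le_spectral_norm M x :
  enorm x <= 1 -> enorm (M *m x) <= spectral_norm M.
Proof.
by move=> x_le1; apply: (sup_upper_bound (spectral_norm_has_sup M)); exists x.
Qed.

Lemma spectral_norm_ge0 M : 0 <= spectral_norm M.
Proof.
by rewrite -enorm0 -(mulmx0 _ M) enorm_mulmx_le_spectral_norm // enorm0.
Qed.

Lemma spectral_norm_le_frobenius M : spectral_norm M <= Num.sqrt (frobenius2 M).
Proof.
apply: ge_sup; first by case: (spectral_norm_has_sup M).
move=> _ [x /= x_le1 <-].
rewrite (le_trans (enorm_mulmx_le M x)) // ler_piMr ?sqrtr_ge0 //.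
Qed.

Lemma frobenius2_le_spectral_norm M :
  frobenius2 M <= n%:R * spectral_norm M ^+ 2.
Proof.
rewrite /frobenius2 exchange_big mulr_natl -[n in _ *+ n]card_ord -sumr_const.
apply: ler_sum => j _.
have -> : \sum_i M i j ^+ 2 = enorm (M *m delta_mx j 0) ^+ 2.
  by rewrite sqr_enorm -colE; apply: eq_bigr => i _; rewrite mxE.
rewrite lerXn2r ?nnegrE ?enorm_ge0 ?spectral_norm_ge0 //.
by rewrite enorm_mulmx_le_spectral_norm ?enorm_delta_mx.
Qed.

Lemma sqrt_frobenius2_le_spectral_norm M :
  Num.sqrt (frobenius2 M) <= Num.sqrt n%:R * spectral_norm M.
Proof.
rewrite -(ger0_norm (spectral_norm_ge0 M)) -sqrtr_sqr -sqrtrM ?ler0n //.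
by rewrite ler_sqrt ?frobenius2_le_spectral_norm // mulr_ge0 ?ler0n ?sqr_ge0.
Qed.

End MatrixNorms.

Section GraphMatrices.
Variables (R : realType) (n : nat).
Implicit Types W : 'M[R]_n.

Lemma adjacency_diag W i : adjacency W i i = 0.
Proof. by rewrite mxE eqxx. Qed.

Lemma laplacian_offdiag W i j : i != j -> laplacian W i j = - adjacency W i j.
Proof. by move=> /negbTE ij; rewrite !mxE ij mulr0n sub0r. Qed.

Lemma frobenius2_adjacency_le_laplacian W1 W2 :
  frobenius2 (adjacency W1 - adjacency W2) <=
  frobenius2 (laplacian W1 - laplacian W2).
Proof.
apply: ler_sum => i _; apply: ler_sum => j _.
have subE (A B : 'M[R]_n) : (A - B) i j = A i j - B i j by rewrite !mxE.
rewrite (subE (adjacency W1)) (subE (laplacian W1)).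
have [<-|ij] := eqVneq i j.
  by rewrite !adjacency_diag subr0 expr0n sqr_ge0.
by rewrite !laplacian_offdiag // -opprD sqrrN.
Qed.

End GraphMatrices.

Theorem lemma2 (R : realType) (n : nat) (WG WH : 'M[R]_n) :
  weight_graph WG -> weight_graph WH ->
  spectral_norm (adjacency WG - adjacency WH)
    <= Num.sqrt (n%:R) * spectral_norm (laplacian WG - laplacian WH).
Proof.
move=> _ _.
apply: le_trans (spectral_norm_le_frobenius _) _.
apply: le_trans (sqrt_frobenius2_le_spectral_norm _).
by rewrite ler_sqrt ?frobenius2_ge0 ?frobenius2_adjacency_le_laplacian.
Qed.
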